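(* Let $a, b, n$ be positive integers with $b>1$, $n>1$ and $\gcd(r_b(n),a)=1$. Then the genus of $S_a(b,n)$ is \[\operatorname{g}(S_a(b,n)) = \frac{(n-1)\, b^n + (r_b(n) - 1)\, a}{2} = \frac{(n-1)\,b^n + a\sum_{j=1}^{n-1} b^j}{2}.\]
   Context: For $\ell \ge 1$, $r_b(\ell) = \sum_{j=0}^{\ell-1} b^j$, and $r_b(0)=0$. For $i \ge 1$, $a_i := r_b(n) + a\, r_b(i-1)$; $S_a(b,n)$ is the numerical semigroup generated by $\{a_i : i\ge 1\}$. The genus $\operatorname{g}(S)$ of a numerical semigroup $S$ is the cardinality of $\mathbb{N}\setminus S$. *)

From mathcomp Require Import all_boot.
Set Implicit Arguments. Unset Strict Implicit. Unset Printing Implicit Defensive.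

Definition rb (b l : nat) : nat := \sum_(j < l) b ^ j.

Definition gen (a b n i : nat) : nat := rb b n + a * rb b i.-1.

Definition inS (a b n x : nat) : Prop :=
  exists s : seq nat, all (fun i => 0 < i) s /\ x = sumn [seq gen a b n i | i <- s].

(* "The genus of S is g": the complement N \ S is finite with exactly g
   elements, witnessed by a duplicate-free list enumerating it. *)
Definition has_genus (a b n g : nat) : Prop :=
  exists l : seq nat, uniq l /\ (forall x, x \in l <-> ~ inS a b n x) /\ size l = g.

(* Let R = r_b(n). For N < R let w(N) be the number of repunits r_b(j), j < n, in the
   greedy expansion of N. Adding one repunit and reducing modulo R raises w by at most one,
   so w(N) is the least number of repunits whose sum is congruent to N modulo R. As
   a_i = R + a r_b(i-1) and a is invertible modulo R, the least element of S_a(b,n)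
   congruent to a N is w(N) R + a N, and the gaps of S_a(b,n) are counted residue class by
   residue class: g = sum_(N < R) (w(N) + floor(a N / R)). The first sum is computed by
   cutting [0, r_b(n+1)) = [0, b r_b(n)] into b blocks of length r_b(n); the second equals
   (a - 1)(R - 1)/2 by the symmetry N |-> R - N. *)

From mathcomp Require Import all_boot zify.

Set Implicit Arguments.
Unset Strict Implicit.
Unset Printing Implicit Defensive.

Lemma rb0 b : rb b 0 = 0. Proof. by rewrite /rb big_ord0. Qed.

Lemma rbS b l : rb b l.+1 = rb b l + b ^ l. Proof. by rewrite /rb big_ord_recr. Qed.

Lemma rbSr b l : rb b l.+1 = b * rb b l + 1.
Proof. by elim: l => [|l IH]; rewrite rbS ?rb0 ?muln0 // {1}IH rbS mulnDr expnS; lia. Qed.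

Lemma rbD b i l : rb b (i + l) = rb b i + b ^ i * rb b l.
Proof.
elim: l => [|l IH]; first by rewrite addn0 rb0 muln0 addn0.
by rewrite addnS !rbS IH expnD; lia.
Qed.

Lemma rb_pred b n : 0 < n -> (rb b n).-1 = \sum_(1 <= j < n) b ^ j.
Proof. by move=> n_gt0; rewrite /rb -(big_mkord xpredT) big_ltn // expn0 add1n. Qed.

Lemma sum_ord_id m : (\sum_(i < m) i) * 2 = m * m.-1.
Proof.
elim: m => [|m IH]; first by rewrite big_ord0.
by rewrite big_ord_recr /= mulnDl IH; case: m {IH} => //= m; lia.
Qed.

Lemma sum_nat_blocks (F : nat -> nat) q R :
  \sum_(0 <= N < q * R) F N = \sum_(i < q) \sum_(0 <= r < R) F (i * R + r).
Proof.
elim: q => [|q IH]; first by rewrite mul0n big_ord0 big_geq.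
rewrite big_ord_recr /= -IH mulSn addnC (@big_cat_nat _ _ _ (q * R)) ?leq_addr //=.
congr (_ + _); rewrite -{1}[q * R]add0n big_addn addKn.
by apply: eq_bigr => i _; rewrite addnC.
Qed.

Lemma divn_mul_pair a R i : coprime a R -> 0 < i < R ->
  (a * i) %/ R + (a * (R - i)) %/ R = a.-1.
Proof.
move=> co /andP[i_gt0 lt_i]; have R_gt0 : 0 < R by apply: leq_trans lt_i.
have mod_gt0 k : 0 < k < R -> 0 < (a * k) %% R.
  case/andP=> k_gt0 lt_k; rewrite lt0n -/(dvdn R (a * k)).
  by rewrite Gauss_dvdr 1?coprime_sym // gtnNdvd.
have t1_gt0 : 0 < (a * i) %% R by apply: mod_gt0; rewrite i_gt0.
have t2_gt0 : 0 < (a * (R - i)) %% R by apply: mod_gt0; lia.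
have sumE : a * i + a * (R - i) = a * R by rewrite -mulnDr subnKC // ltnW.
(* The remainders lie in (0, R) and add up to a multiple of R, hence to R itself. *)
move: t1_gt0 t2_gt0 sumE (ltn_pmod (a * i) R_gt0) (ltn_pmod (a * (R - i)) R_gt0).
move: (divn_eq (a * i) R) (divn_eq (a * (R - i)) R).
move: (a * i) (a * (R - i)) => x y; move: (x %/ R) (y %/ R) (x %% R) (y %% R) => q1 q2 t1 t2.
nia.
Qed.

Lemma sum_mul_divn a R : coprime a R -> (\sum_(N < R) (a * N) %/ R) * 2 = a.-1 * R.-1.
Proof.
move=> co; case: R co => [|R] co; first by rewrite big_ord0 muln0.
rewrite -(big_mkord xpredT (fun N => (a * N) %/ R.+1)) big_ltn // muln0 div0n add0n.
rewrite muln2 -addnn {2}big_nat_rev -big_split /=.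
rewrite (eq_big_nat _ _ (F2 := fun=> a.-1)) => [|i lt_i].
  by rewrite sum_nat_const_nat subn1 mulnC.
by rewrite -(divn_mul_pair co lt_i); congr (_ + _ %/ _); lia.
Qed.

Lemma exists_modn_inv R a : 0 < a -> 1 < R -> coprime R a -> exists v, a * v %% R = 1.
Proof.
move=> a_gt0 R_gt1 co; case: (egcdnP R a_gt0) => u w uaE _.
by exists u; rewrite mulnC uaE gcdnC (eqP co) modnMDl modn_small.
Qed.

Section Repunits.
Variable b : nat.
Hypothesis b_gt0 : 0 < b.

Lemma ltn_rb j l : j < l -> rb b j < rb b l.
Proof.
elim: l => [//|l IH]; rewrite ltnS leq_eqVlt => /orP[/eqP->|/IH lt_jl].
  by rewrite rbS -[X in X < _]addn0 ltn_add2l expn_gt0 b_gt0.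
by rewrite rbS (leq_trans lt_jl) ?leq_addr.
Qed.

Lemma rb_gt0 l : 0 < l -> 0 < rb b l.
Proof. by move=> /ltn_rb; rewrite rb0. Qed.

Fixpoint rdecomp (n N : nat) : seq nat :=
  if n is n'.+1 then nseq (N %/ rb b n') n' ++ rdecomp n' (N %% rb b n') else [::].

(* By rweight_sumn, rweight n N is also the least number of repunits whose sum is
   congruent to N modulo rb b n. *)
Definition rweight n N := size (rdecomp n N).

Lemma sum_rdecomp n N : N < rb b n -> sumn [seq rb b j | j <- rdecomp n N] = N.
Proof.
elim: n N => [|[|n] IH] N; first by rewrite rb0.
  by rewrite rbSr rb0 muln0 ltnS leqn0 => /eqP-> /=; rewrite div0n.
move=> _ /=; rewrite map_cat sumn_cat map_nseq sumn_nseq IH ?ltn_pmod ?rb_gt0 //.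
by rewrite mulnC -divn_eq.
Qed.

Lemma rweight0 n : rweight n 0 = 0.
Proof. by rewrite /rweight; elim: n => //= n IH; rewrite div0n mod0n. Qed.

Lemma rweightMD n q r : r < rb b n -> rweight n.+1 (q * rb b n + r) = q + rweight n r.
Proof.
move=> lt_r; have rb_pos : 0 < rb b n by apply: leq_ltn_trans lt_r.
by rewrite /rweight /= size_cat size_nseq divnMDl // modnMDl divn_small ?modn_small ?addn0.
Qed.

Lemma rweight_ltn n N : N < rb b n -> rweight n.+1 N = rweight n N.
Proof. by move=> lt_N; rewrite -[N]add0n -(mul0n (rb b n)) rweightMD. Qed.

Lemma rweight_rb_pred n : rweight n (rb b n).-1 <= b.
Proof.
case: n => [|n]; first by rewrite rb0 rweight0.
case: (posnP (rb b n)) => [rb_eq0|rb_pos]; first by rewrite rbSr rb_eq0 muln0 rweight0.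
by rewrite rbSr addn1 /= -[b * _]addn0 rweightMD // rweight0 addn0.
Qed.

Lemma rweight_pred n N : 0 < N < rb b n -> rweight n N.-1 <= rweight n N + b.-1.
Proof.
elim: n N => [|[|n] IH] N /andP[N_gt0 lt_N]; first by rewrite rb0 in lt_N.
  by move: lt_N; rewrite rbSr rb0; lia.
set R := rb b n.+1 in IH *; have R_gt0 : 0 < R by rewrite rb_gt0.
rewrite (divn_eq N R); set q := N %/ R; set r := N %% R.
have lt_r : r < R by rewrite ltn_pmod.
rewrite rweightMD //; case: (posnP r) => [r0|r_gt0].
  have q_gt0 : 0 < q by move: N_gt0; rewrite (divn_eq N R) -/q -/r r0; case: (q).
  have -> : (q * R + r).-1 = q.-1 * R + R.-1 by rewrite r0 -{1}(prednK q_gt0); lia.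
  by rewrite rweightMD ?prednK // r0 rweight0; have := rweight_rb_pred n.+1; rewrite -/R; lia.
have -> : (q * R + r).-1 = q * R + r.-1 by lia.
by rewrite rweightMD; [have := IH r; rewrite r_gt0 lt_r; lia | lia].
Qed.

Lemma rweight_carry n c s : 0 < n -> s < rb b n -> c * rb b n + s <= b.+1 * rb b n ->
  rweight n.+1 ((c * rb b n + s) %% rb b n.+1) + (c * rb b n + s) %/ rb b n.+1
    <= c + rweight n s.
Proof.
move=> n_gt0 lt_s le_M; set R := rb b n in lt_s le_M *; set M := c * R + s in le_M *.
have R_gt0 : 0 < R by rewrite rb_gt0.
have R'E : rb b n.+1 = b * R + 1 by rewrite rbSr.
have le_R_bR : R <= b * R by rewrite leq_pmull.
rewrite R'E mulSn in le_M *; case: (ltnP M (b * R + 1)) => [lt_M|ge_M].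
  by rewrite modn_small // divn_small // addn0 rweightMD.
have -> : M %% (b * R + 1) = M - (b * R + 1).
  by rewrite -[in LHS](subnK ge_M) modnDr modn_small; lia.
have -> : M %/ (b * R + 1) = 1.
  by rewrite -[in LHS](subnK ge_M) divnDr ?dvdnn // divnn addn1 divn_small //; lia.
rewrite rweight_ltn; last by rewrite /M; lia.
case: (posnP s) => [s0|s_gt0].
  have c_eq : c = b.+1 by move: ge_M le_M; rewrite /M s0 addn0; nia.
  have -> : M - (b * R + 1) = R.-1 by rewrite /M s0 c_eq; lia.
  by have := rweight_rb_pred n; rewrite -/R c_eq; lia.
have c_eq : c = b by move: ge_M le_M; rewrite /M; nia.
have -> : M - (b * R + 1) = s.-1 by rewrite /M c_eq; lia.
by have := @rweight_pred n s; rewrite s_gt0 lt_s c_eq; lia.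
Qed.

Lemma rweight_addrb_ltn n N j : j < n -> N < rb b n ->
  rweight n ((N + rb b j) %% rb b n) + (N + rb b j) %/ rb b n <= rweight n N + 1.
Proof.
elim: n N j => [//|[|n] IH] N j lt_j lt_N.
  move: lt_j lt_N; rewrite rbSr rb0 muln0 !ltnS !leqn0 => /eqP-> /eqP->.
  by rewrite rb0 mod0n div0n rweight0.
set R := rb b n.+1 in IH *; have R_gt0 : 0 < R by rewrite rb_gt0.
rewrite (divn_eq N R); set q := N %/ R; set r := N %% R.
have lt_r : r < R by rewrite ltn_pmod.
have carry_r : rweight n.+1 ((r + rb b j) %% R) + (r + rb b j) %/ R <= rweight n.+1 r + 1.
  move: lt_j; rewrite ltnS leq_eqVlt => /orP[/eqP-> | /IH/(_ lt_r)//].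
  by rewrite -/R modnDr divnDr ?dvdnn // divnn R_gt0 modn_small // divn_small.
set s := (r + rb b j) %% R in carry_r *; set d := (r + rb b j) %/ R in carry_r *.
have le_Rj : rb b j <= R.
  by move: lt_j; rewrite ltnS leq_eqVlt => /orP[/eqP->//|/ltn_rb/ltnW].
have -> : q * R + r + rb b j = (q + d) * R + s.
  by rewrite -addnA {1}(divn_eq (r + rb b j) R) -/s -/d; lia.
rewrite rweightMD //; apply: (leq_trans (@rweight_carry n.+1 (q + d) s _ _ _)) => //.
- by rewrite /s ltn_pmod.
- move: lt_N; rewrite (divn_eq N R) -/q -/r rbSr -/R mulSn => lt_N.
  by rewrite mulnDl -addnA -(divn_eq (r + _) R); lia.
- lia.
Qed.

Lemma rweight_addrb n N j : 0 < n -> N < rb b n ->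
  rweight n ((rb b j + N) %% rb b n) <= rweight n N + 1.
Proof.
move=> n_gt0 lt_N; elim/ltn_ind: j => j IH; case: (ltnP j n) => [lt_j|le_nj].
  by apply: leq_trans (@rweight_addrb_ltn n N j lt_j lt_N); rewrite addnC leq_addr.
have -> : rb b j + N = b ^ (j - n) * rb b n + (rb b (j - n) + N).
  by rewrite -{1}(subnK le_nj) rbD; lia.
by rewrite modnMDl IH //; lia.
Qed.

Lemma rweight_sumn n L : 0 < n ->
  rweight n (sumn [seq rb b j | j <- L] %% rb b n) <= size L.
Proof.
move=> n_gt0; have R_gt0 : 0 < rb b n by rewrite rb_gt0.
elim: L => [|j L IH] /=; first by rewrite mod0n rweight0.
rewrite -modnDmr; apply: leq_trans (@rweight_addrb n _ j n_gt0 _) _; first by rewrite ltn_pmod.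
by rewrite addn1 ltnS.
Qed.

Lemma sum_rweight n : (\sum_(N < rb b n) rweight n N) * 2 = (n - 1) * b ^ n + (rb b n - 1).
Proof.
elim: n => [|[|n] IH]; first by rewrite rb0 big_ord0.
  by rewrite rbSr rb0 muln0 big_ord1 rweight0.
set R := rb b n.+1 in IH *; have R_gt0 : 0 < R by rewrite rb_gt0.
set S := \sum_(N < R) rweight n.+1 N in IH.
have block i : \sum_(0 <= r < R) rweight n.+2 (i * R + r) = i * R + S.
  rewrite (eq_big_nat _ _ (F2 := fun r => i + rweight n.+1 r)); last first.
    by move=> r /andP[_ lt_r]; rewrite rweightMD.
  by rewrite big_split sum_nat_const_nat subn0 big_mkord mulnC.
rewrite rbSr -/R addn1 big_ord_recr /= -(big_mkord xpredT) -/(index_iota 0 (b * R)).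
rewrite sum_nat_blocks (eq_bigr (fun i : 'I_b => i * R + S)) => [|i _]; last exact: block.
rewrite big_split /=.
rewrite -big_distrl /= sum_nat_const card_ord -[b * R]addn0 rweightMD // rweight0 addn0.
have powE : R + b ^ n.+1 = b * R + 1 by rewrite -rbS rbSr.
rewrite [b ^ n.+2]expnS; rewrite subSS subn0 in IH; have := sum_ord_id b.
move: (\sum_(i < b) i) (b ^ n.+1) powE IH => T B powE IH sumT.
have h1 : T * R * 2 = R * (b * b.-1) by rewrite mulnAC sumT mulnC.
have h2 : b * S * 2 = n * (b * B) + b * (R - 1) by rewrite -mulnA IH mulnDr mulnCA.
have h3 : b * R + b * B = b * (b * R) + b by rewrite -mulnDr powE mulnDr muln1.
clear -b_gt0 R_gt0 h1 h2 h3; case: b b_gt0 h1 h2 h3 => // c _ /= h1 h2 h3.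
nia.
Qed.

End Repunits.

Lemma sumn_gen a b n s :
  sumn [seq gen a b n i | i <- s] = size s * rb b n + a * sumn [seq rb b i.-1 | i <- s].
Proof. by elim: s => [|i s IH] /=; rewrite ?muln0 // IH /gen mulnDr; lia. Qed.

Section AperySet.
Variables a b n v : nat.
Hypotheses (b_gt0 : 0 < b) (n_gt0 : 0 < n) (av1 : a * v %% rb b n = 1).
Local Notation R := (rb b n).

Let R_gt0 : 0 < R. Proof. exact: rb_gt0. Qed.

(* The least element of S_a(b,n) congruent to a * N modulo R. *)
Definition apery N := rweight b n N * R + a * N.

Lemma mulnK_inv M : a * M * v = M %[mod R].
Proof. by rewrite mulnAC -modnMml av1 mul1n. Qed.

Lemma apery_mod x : apery (x * v %% R) = x %[mod R].
Proof. by rewrite /apery modnMDl modnMmr mulnCA -modnMmr av1 muln1. Qed.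

Lemma apery_class N : N < R -> apery N * v %% R = N.
Proof. by move=> lt_N; rewrite -modnMml /apery modnMDl modnMml mulnK_inv modn_small. Qed.

Lemma inS_apery x : inS a b n x <-> apery (x * v %% R) <= x.
Proof.
split=> [[s [_ ->]] | le_x].
  rewrite sumn_gen; set M := sumn _.
  have -> : (size s * R + a * M) * v %% R = M %% R.
    by rewrite -modnMml modnMDl modnMml mulnK_inv.
  have := rweight_sumn b_gt0 [seq i.-1 | i <- s] n_gt0.
  rewrite -map_comp -/M size_map => le_w.
  by rewrite /apery leq_add ?leq_mul ?leq_mod.
set N := x * v %% R in le_x *; have lt_N : N < R by rewrite ltn_pmod.
have : R %| x - apery N by rewrite -eqn_mod_dvd // apery_mod.
case/dvdnP=> c xE; exists ([seq j.+1 | j <- rdecomp b n N] ++ nseq c 1); split.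
  by rewrite all_cat all_nseq orbT andbT; apply/allP => _ /mapP[j _ ->].
rewrite sumn_gen size_cat size_map size_nseq map_cat sumn_cat map_nseq sumn_nseq /= rb0.
rewrite -map_comp (_ : [seq _ | _ <- _] = [seq rb b j | j <- rdecomp b n N]) //.
by rewrite sum_rdecomp //; move: le_x xE; rewrite /apery /rweight; lia.
Qed.

Definition gaps := [seq apery N %% R + R * t | N <- iota 0 R, t <- iota 0 (apery N %/ R)].

Lemma mem_gaps x : (x \in gaps) = (x < apery (x * v %% R)).
Proof.
apply/allpairsPdep/idP => [[N [t [+ + ->]]] | lt_x].
  rewrite !mem_iota !add0n => /andP[_ lt_N] /andP[_ lt_t].
  rewrite -modnMml addnC mulnC modnMDl modn_mod modnMml apery_class //.
  have : t.+1 * R <= apery N %/ R * R by rewrite leq_mul2r lt_t orbT.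
  by rewrite {2}(divn_eq (apery N) R) mulSn; lia.
set N := x * v %% R in lt_x *; have modE : x %% R = apery N %% R by rewrite apery_mod.
exists N, (x %/ R); rewrite !mem_iota !add0n !leq0n ltn_pmod //=; split => //.
  rewrite -(ltn_pmul2r R_gt0); move: lt_x (divn_eq x R) (divn_eq (apery N) R).
  by rewrite modE; lia.
by rewrite -modE mulnC addnC -divn_eq.
Qed.

Lemma uniq_gaps : uniq gaps.
Proof.
apply: allpairs_uniq_dep => [|N _|]; rewrite ?iota_uniq //.
move=> _ _ /allpairsPdep[N1 [t1 [+ _ ->]]] /allpairsPdep[N2 [t2 [+ _ ->]]].
rewrite !mem_iota !add0n /= => lt_N1 lt_N2 eq_x.
have eq_N : N1 = N2.
  rewrite -(apery_class lt_N1) -(apery_class lt_N2) -modnMml -[in RHS]modnMml.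
  move/(congr1 (modn^~ R)): eq_x.
  by rewrite !(addnC (_ %% R)) !(mulnC R) !modnMDl !modn_mod => ->.
by move: eq_x; rewrite eq_N => /addnI/eqP; rewrite eqn_mul2l gtn_eqF //= => /eqP->.
Qed.

Lemma size_gaps : size gaps = \sum_(N < R) (rweight b n N + (a * N) %/ R).
Proof.
rewrite size_allpairs_dep sumnE big_map.
rewrite -(big_mkord xpredT (fun N => rweight b n N + a * N %/ R)) /index_iota subn0.
by apply: eq_bigr => N _; rewrite size_iota /apery divnMDl.
Qed.

End AperySet.

Theorem corollary26 (a b n : nat) :
  0 < a -> 1 < b -> 1 < n -> coprime (rb b n) a ->
  exists g : nat, has_genus a b n g /\
    g * 2 = (n - 1) * b ^ n + (rb b n - 1) * a /\
    g * 2 = (n - 1) * b ^ n + a * \sum_(1 <= j < n) b ^ j.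
Proof.
move=> a_gt0 b_gt1 n_gt1 co; have b_gt0 := ltnW b_gt1; have n_gt0 := ltnW n_gt1.
have R_gt1 : 1 < rb b n by have := ltn_rb b_gt0 n_gt1; rewrite rbSr rb0 muln0.
have [v av1] := exists_modn_inv a_gt0 R_gt1 co.
exists (\sum_(N < rb b n) (rweight b n N + (a * N) %/ rb b n)).
have genusE : (\sum_(N < rb b n) (rweight b n N + (a * N) %/ rb b n)) * 2
              = (n - 1) * b ^ n + (rb b n - 1) * a.
  rewrite big_split mulnDl sum_rweight // sum_mul_divn 1?coprime_sym // -addnA !subn1.
  by rewrite -mulSn prednK // (mulnC a).
split; first last.
  by split; rewrite genusE // -rb_pred // -subn1 (mulnC a).
exists (gaps a b n); split; first exact: uniq_gaps av1.
split; last exact: size_gaps.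
move=> x; rewrite (mem_gaps b_gt0 n_gt0 av1) (inS_apery b_gt0 n_gt0 av1) ltnNge.
by split=> /negP.
Qed.
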